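(* Let $a,b>1$ be real numbers, $h_n:=\frac{1}{a^n}$ and $k_n:=\frac{1}{b^n}$. Let $f$ be a real valued function defined on $D=\{0,h_1,-k_1,h_2,-k_2,\ldots\}$ and let $R,L$ be real numbers. Assume $f(0)=0$ and \[\frac{f(h_n)}{h_n}\to R\quad\text{and}\quad\frac{f(-k_n)}{-k_n}\to L.\] Then: (i) if $\frac{\log a}{\log b}$ is a rational number, then $R$ and $L$ are the only accumulation points of the set of sequential cord derivatives of $f$ at $0$; (ii) if $\frac{\log a}{\log b}$ is irrational, then every real number between $L$ and $R$ is a sequential cord derivative of $f$ at $0$.
   Context: $L'\in\overline{\mathbb{R}}=\mathbb{R}\cup\{\pm\infty\}$ is a sequential cord derivative of $f$ at $0$ if there are sequences $h'_n>0$, $k'_n>0$ with $h'_n\to0$, $k'_n\to0$, $h'_n\in D$, $-k'_n\in D$ for all $n$, and $\frac{f(h'_n)-f(-k'_n)}{h'_n+k'_n}\to L'$. *)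

From HB Require Import structures.
From mathcomp Require Import all_boot all_order all_algebra.
From mathcomp Require Import all_classical all_reals all_analysis.
Set Implicit Arguments. Unset Strict Implicit. Unset Printing Implicit Defensive.
Import Order.TTheory GRing.Theory Num.Theory.
Import numFieldNormedType.Exports.
Local Open Scope classical_set_scope.
Local Open Scope ring_scope.

Definition Dset (R : realType) (a b : R) : set R :=
  [set x | x = 0 \/ exists2 n : nat, (0 < n)%N & (x = a ^- n \/ x = - b ^- n)].

Definition seq_cord_deriv (R : realType) (a b : R) (f : R -> R) (l : \bar R) : Prop :=
  exists hp kp : nat -> R,
    (forall n, 0 < hp n) /\ (forall n, 0 < kp n) /\
    hp @ \oo --> (0 : R) /\ kp @ \oo --> (0 : R) /\
    (forall n, Dset a b (hp n)) /\ (forall n, Dset a b (- kp n)) /\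
    (fun n => ((f (hp n) - f (- kp n)) / (hp n + kp n))%:E) @ \oo --> l.

(* Write h = a^-m and k = b^-j.  The cord quotient (f h - f (-k)) / (h + k) is
   the convex combination t (f h / h) + (1 - t) (f (-k) / (-k)) with weight
   t = h / (h + k) = 1 / (1 + exp (m ln a - j ln b)), so along admissible
   sequences it is t R + (1 - t) L + o(1): the sequential cord derivatives are
   the limits of t_n R + (1 - t_n) L for such weights t_n.
   If ln a / ln b is irrational, the additive group generated by ln a and ln b
   is not cyclic, hence has arbitrarily small positive elements, so the
   exponents m ln a - j ln b with m, j large are dense and every weight in
   [0, 1] is a limit.  If P ln a = Q ln b, the exponents lie on the lattice
   (ln a / Q) Z, whose image under the weight map accumulates only at 0 and 1,
   while each attainable weight is the constant weight of the periodic sequences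
   (m + P n, j + Q n). *)

From HB Require Import structures.
From mathcomp Require Import all_boot all_order all_algebra.
From mathcomp Require Import all_classical all_reals all_analysis.
From mathcomp Require Import ring lra zify.
Import Order.TTheory GRing.Theory Num.Theory.
Import numFieldNormedType.Exports.
Local Open Scope classical_set_scope.
Local Open Scope ring_scope.

Lemma cvgn_infty_ge (m : nat -> nat) : (forall n, n <= m n)%N -> m @ \oo --> \oo.
Proof.
move=> le_m; apply/cvgnyPge => A; near=> n.
by apply: leq_trans (le_m n); near: n; exact: nbhs_infty_ge.
Unshelve. all: end_near. Qed.

Section RealSequences.
Context {R : realType}.
Implicit Types (c : R) (m : nat -> nat).

Lemma ltr_exprVn c (i j : nat) : 1 < c -> (c ^- i < c ^- j) = (j < i)%N.
Proof.
move=> c_gt1; have c_gt0 : 0 < c by exact: lt_trans c_gt1.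
by rewrite ltf_pV2 ?posrE ?exprn_gt0// ltr_eXn2l.
Qed.

Lemma exprVn_cvg0P c m :
  1 < c -> (fun n => c ^- m n) @ \oo --> (0 : R) <-> m @ \oo --> \oo.
Proof.
move=> c_gt1; have c_gt0 : 0 < c by exact: lt_trans c_gt1.
split=> [cm0|m_oo]; last first.
  under eq_fun do rewrite -exprVn.
  apply: (cvg_comp _ _ m_oo); apply: cvg_expr.
  by rewrite ger0_norm ?invr_ge0 ?ltW// invf_lt1.
apply/cvgnyPge => A; have cA_gt0 : 0 < c ^- A by rewrite invr_gt0 exprn_gt0.
apply: filterS (cvgr_dist_lt _ _ cm0 _ cA_gt0) => n.
by rewrite sub0r normrN ger0_norm ?invr_ge0 ?exprn_ge0 ?ltW// ltr_exprVn// => /ltnW.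
Qed.

End RealSequences.

Section FilterLemmas.
Context {R : realType} {T : Type} {F : set_system T} {FF : Filter F}.

Lemma cvgr_EFin {u : T -> R} {x : R} :
  u @ F --> x -> (fun t => (u t)%:E) @ F --> x%:E.
Proof. by move=> ux; apply: cvg_EFin => //; near=> t. Unshelve. all: end_near. Qed.

Lemma cvge_EFin_sub0 (u v : T -> R) (l : \bar R) :
  (fun t => u t - v t) @ F --> 0 ->
  (fun t => (v t)%:E) @ F --> l -> (fun t => (u t)%:E) @ F --> l.
Proof.
move=> uv0 vl.
suff -> : (fun t => (u t)%:E) = ((fun t => (v t)%:E) \+ (fun t => (u t - v t)%:E))%E.
  by rewrite -[l]adde0; exact: cvgeD (fin_num_adde_defl _ _) vl (cvgr_EFin uv0).
by apply/funext => t /=; rewrite -EFinD subrKC.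
Qed.

Lemma cvg_convex_combB {s A B : T -> R} {x y : R} :
  (forall t, 0 <= s t <= 1) -> A @ F --> x -> B @ F --> y ->
  (fun t => s t * A t + (1 - s t) * B t - (s t * x + (1 - s t) * y)) @ F --> 0.
Proof.
move=> s01 Ax By; apply/cvgrPdist_lt => e e_gt0.
have e2_gt0 : 0 < e / 2 by rewrite divr_gt0.
near=> t; have /andP[s0 s1] := s01 t.
have : `|x - A t| < e / 2 by near: t; exact: cvgr_dist_lt.
have : `|y - B t| < e / 2 by near: t; exact: cvgr_dist_lt.
rewrite sub0r normrN !ltr_distl => /andP[? ?] /andP[? ?]; apply/andP; split; nra.
Unshelve. all: end_near. Qed.

End FilterLemmas.

Lemma cvge_EFin_itv {R : realType} {u : nat -> R} {lo hi : R} {l : \bar R} :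
  (forall n, lo <= u n <= hi) -> (fun n => (u n)%:E) @ \oo --> l ->
  exists x : R, [/\ l = x%:E, u @ \oo --> x & lo <= x <= hi].
Proof.
move=> u_itv; case: l => [x||] ul.
- have ux : u @ \oo --> x by exact: fine_cvg ul.
  exists x; split=> //.
  have x_itv : [set` `[lo, hi]] x.
    apply: (closed_cvg _ _ _ _ ux); first exact: interval_closed.
    by near=> n; rewrite /= in_itv u_itv.
  by rewrite /= in_itv in x_itv.
- have [n /=] := filter_ex ((cvgeyPge _).1 ul (hi + 1)).
  by rewrite lee_fin; have := u_itv n; lra.
- have [n /=] := filter_ex ((cvgeNyPle _).1 ul (lo - 1)).
  by rewrite lee_fin; have := u_itv n; lra.
Unshelve. all: end_near. Qed.

Lemma near_cst_cvg_eq {R : realType} {u : nat -> R} {c x : R} :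
  (\forall n \near \oo, u n = c) -> u @ \oo --> x -> x = c.
Proof. by move=> uc ux; rewrite -(cvg_lim _ ux) //; exact: lim_near_cst. Qed.

Lemma limit_point_cvg {T : topologicalType} (S : set T) (u : nat -> T) (x : T) :
  (forall n, S (u n)) -> (forall n, u n != x) -> u @ \oo --> x -> limit_point S x.
Proof. by move=> Su ux u_x U /u_x [N _ UN]; exists (u N); split=> //; apply: UN => /=. Qed.

Section ExtendedLimitPoints.
Context {R : realType}.
Implicit Types (S : set (\bar R)) (r e lo hi : R).

Lemma EFin_not_limit_point {S r e} : 0 < e ->
  (forall x y : R, S x%:E -> S y%:E -> `|r - x| < e -> `|r - y| < e -> x = y) ->
  ~ limit_point S r%:E.
Proof.
move=> e_gt0 S_uniq LP.
have near_r d : 0 < d -> exists x : R, [/\ x != r, S x%:E & `|r - x| < d].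
  move=> d_gt0.
  have : nbhs r%:E [set y | exists2 x : R, y = x%:E & `|r - x| < d].
    by apply/nbhs_EFin; apply: filterS (nbhsx_ballx r d d_gt0) => x rx; exists x.
  move=> /LP [y [yr Sy [x yx rx]]]; rewrite {}yx in yr Sy.
  by exists x; split=> //; apply: contraNneq yr => ->.
have [x [xr Sx rx]] := near_r e e_gt0.
have rx_gt0 : 0 < Num.min e `|r - x| by rewrite lt_min e_gt0 normr_gt0 subr_eq0 eq_sym.
have [y [_ Sy]] := near_r _ rx_gt0; rewrite lt_min => /andP[ry ryx].
by move: ryx; rewrite (S_uniq x y) ?ltxx.
Qed.

Lemma limit_point_fin_num {S lo hi} :
  (forall y, S y -> (lo%:E <= y <= hi%:E)%E) ->
  forall y, limit_point S y -> y \is a fin_num.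
Proof.
move=> S_itv [r//||] LP.
- have [z [_ Sz]] := LP _ (ereal_nbhs_pinfty_gt (num_real hi)).
  by have /andP[_ zhi] := S_itv z Sz; rewrite /= ltNge zhi.
- have [z [_ Sz]] := LP _ (ereal_nbhs_ninfty_lt (num_real lo)).
  by have /andP[loz _] := S_itv z Sz; rewrite /= ltNge loz.
Qed.

End ExtendedLimitPoints.

Section SigmoidN.
Context {R : realType}.
Implicit Types (c v x y tau : R).

Definition sigmoidN v := (1 + expR v)^-1.

Lemma sigmoidN_gt0 v : 0 < sigmoidN v.
Proof. by rewrite invr_gt0 addr_gt0 ?expR_gt0. Qed.

Lemma sigmoidN_lt1 v : sigmoidN v < 1.
Proof. by rewrite invf_lt1 ?addr_gt0 ?expR_gt0 ?ltrDl ?expR_gt0. Qed.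

Lemma ltr_sigmoidN : {mono sigmoidN : x y /~ x < y}.
Proof.
by move=> x y; rewrite ltf_pV2 ?posrE ?addr_gt0 ?expR_gt0 // ltrD2l ltr_expR.
Qed.

Lemma sigmoidN_ln x : 0 < x -> sigmoidN (ln x) = (1 + x)^-1.
Proof. by move=> x_gt0; rewrite /sigmoidN lnK. Qed.

Lemma continuous_sigmoidN : continuous sigmoidN.
Proof.
move=> v; apply: cvgV; first by rewrite gt_eqF ?addr_gt0 ?expR_gt0.
by apply: cvgD; [exact: cvg_cst | exact: continuous_expR].
Qed.

Lemma sigmoidN_lattice_isolated c tau : 0 < c -> tau != 0 -> tau != 1 ->
  exists2 d, 0 < d & forall k1 k2 : int,
    `|sigmoidN (k1%:~R * c) - tau| < d -> `|sigmoidN (k2%:~R * c) - tau| < d -> k1 = k2.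
Proof.
move=> c_gt0 tau_neq0 tau_neq1.
have [tau_lt0|tau_gt0] := ltP tau 0.
  exists (- tau) => [|k1 k2]; first by rewrite oppr_gt0.
  rewrite ltr_distl => /andP[_ lt0] _; exfalso.
  by have := sigmoidN_gt0 (k1%:~R * c); lra.
have [tau_gt1|tau_le1] := ltP 1 tau.
  exists (tau - 1) => [|k1 k2]; first by rewrite subr_gt0.
  rewrite ltr_distl => /andP[gt1 _] _; exfalso.
  by have := sigmoidN_lt1 (k1%:~R * c); lra.
have {tau_gt0}tau_gt0 : 0 < tau by rewrite lt_neqAle eq_sym tau_neq0.
have {tau_le1}tau_lt1 : tau < 1 by rewrite lt_neqAle tau_neq1.
pose v0 := ln (tau^-1 - 1).
have sv0 : sigmoidN v0 = tau.
  by rewrite sigmoidN_ln ?subr_gt0 ?invf_gt1// addrC subrK invrK.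
(* A weight within [d] of [tau] comes from an exponent within [c / 2] of [v0],
   and at most one point of the lattice [c Z] lies there. *)
pose d := Num.min (sigmoidN (v0 - c / 2) - tau) (tau - sigmoidN (v0 + c / 2)).
have c2_gt0 : 0 < c / 2 by rewrite divr_gt0.
exists d => [|k1 k2].
  by rewrite lt_min !subr_gt0 -sv0 !ltr_sigmoidN ltrDl gtrDl oppr_lt0 c2_gt0.
have d_l : d <= sigmoidN (v0 - c / 2) - tau by rewrite ge_min lexx.
have d_r : d <= tau - sigmoidN (v0 + c / 2) by rewrite ge_min lexx orbT.
have near_v0 k : `|sigmoidN (k%:~R * c) - tau| < d -> `|k%:~R * c - v0| < c / 2.
  rewrite !ltr_distl => /andP[gt_r lt_l].
  have : sigmoidN (k%:~R * c) < sigmoidN (v0 - c / 2) by lra.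
  have : sigmoidN (v0 + c / 2) < sigmoidN (k%:~R * c) by lra.
  by rewrite !ltr_sigmoidN; lra.
move=> /near_v0 k1_v0 /near_v0 k2_v0.
have : `|(k1 - k2)%:~R * c| < c.
  rewrite intrB mulrBl; apply: le_lt_trans (ler_distD v0 _ _) _.
  by rewrite [X in _ + X]distrC; lra.
rewrite normrM (gtr0_norm c_gt0) gtr_pMl// -intr_norm ltrz1; lia.
Qed.

End SigmoidN.

Section AdditiveSubgroups.
Context {R : realType} (G : set R).
Hypothesis G_sub : forall x y, G x -> G y -> G (x - y).

Lemma subgroup_mulrz {x} (k : int) : G x -> G (k%:~R * x).
Proof.
move=> Gx; have G0 : G 0 by rewrite -(subrr x); exact: G_sub.
have GN y : G y -> G (- y) by move=> Gy; rewrite -sub0r; exact: G_sub.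
have Gn (n : nat) : G (n%:R * x).
  elim: n => [|n IHn]; first by rewrite mul0r.
  by rewrite -natr1 mulrDl mul1r -[x in _ + x]opprK; apply: G_sub => //; exact: GN.
by case: k => n; [exact: Gn | rewrite NegzE intrN mulNr; exact/GN/Gn].
Qed.

Lemma subgroup_dense_or_cyclic {x0} : G x0 -> 0 < x0 ->
  (forall e, 0 < e -> exists2 x, G x & 0 < x < e) \/
  (exists2 g, 0 < g & forall x, G x -> exists k : int, x = k%:~R * g).
Proof.
move=> Gx0 x0_gt0; pose P := [set x | G x /\ 0 < x].
have P_lb : has_lbound P by exists 0 => x [_ /ltW].
have P_inf : has_inf P by split; [exists x0 | ].
have inf_le x : P x -> inf P <= x by exact: ge_inf.
have [inf_le0|inf_gt0] := leP (inf P) 0.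
  left=> e e_gt0; have [x [Gx x_gt0] xe] := inf_adherent e_gt0 P_inf.
  by exists x => //; rewrite x_gt0 /=; lra.
right; exists (inf P) => //.
have P_inf_mem : P (inf P).
  have [x Px x_lt] := inf_adherent inf_gt0 P_inf.
  have [x_le|x_gt] := leP x (inf P).
    by have -> : inf P = x by apply/le_anti; rewrite x_le inf_le.
  have x_inf_gt0 : 0 < x - inf P by rewrite subr_gt0.
  have [y Py y_lt] := inf_adherent x_inf_gt0 P_inf.
  exfalso; have : P (x - y) by split; [exact: G_sub Px.1 Py.1 | lra].
  by move=> /inf_le; have := inf_le _ Py; lra.
move=> z Gz; exists (Num.floor (z / inf P)); set k := Num.floor _.
have /andP[kz zk] := floor_itv (z / inf P); rewrite -/k in kz zk.
rewrite ler_pdivlMr // in kz; rewrite intrD ltr_pdivrMr // in zk.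
have G_rem : G (z - k%:~R * inf P) by apply: G_sub Gz (subgroup_mulrz k P_inf_mem.1).
have [rem_le0|rem_gt0] := leP (z - k%:~R * inf P) 0; first lra.
by have := inf_le _ (conj G_rem rem_gt0); lra.
Qed.

End AdditiveSubgroups.

Lemma natcomb_approx {R : realType} (la lb : R) (p q : nat) (u : R) (N : nat) :
  0 < la -> 0 < lb -> 0 < `|p%:R * la - q%:R * lb| ->
  exists m j : nat, [/\ (N <= m)%N, (N <= j)%N &
    `|u - (m%:R * la - j%:R * lb)| < `|p%:R * la - q%:R * lb|].
Proof.
wlog d_gt0 : la lb p q u / 0 < p%:R * la - q%:R * lb.
  move=> wlog la_gt0 lb_gt0; have [d_lt0|d_gt0|->] := ltgtP (p%:R * la - q%:R * lb) 0.
  - have := wlog lb la q p (- u).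
    rewrite -[q%:R * lb - _]opprB oppr_gt0 normrN => /(_ d_lt0 lb_gt0 la_gt0).
    move=> /[apply] -[j [m [Nj Nm close]]]; exists m, j; split=> //.
    suff -> : u - (m%:R * la - j%:R * lb) = - (- u - (j%:R * lb - m%:R * la)).
      by rewrite normrN.
    by ring.
  - exact: wlog.
  - by rewrite normr0 ltxx.
move=> la_gt0 lb_gt0 _; rewrite (gtr0_norm d_gt0); set d := p%:R * la - q%:R * lb.
have [j0 [Nj0 j0_ge]] : exists j0 : nat, (N <= j0)%N /\ N%:R * la - u <= j0%:R * lb.
  near \oo => j0; exists j0; split; first by near: j0; exact: nbhs_infty_ge.
  by rewrite -ler_pdivrMr //; near: j0; exact: nbhs_infty_ger.
pose v0 := N%:R * la - j0%:R * lb.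
have x_ge0 : 0 <= (u - v0) / d.
  by apply: divr_ge0; [rewrite subr_ge0 /v0; lra | exact: ltW].
have /andP[kx xk] := trunc_itv x_ge0; set k := Num.trunc _ in kx xk.
exists (N + k * p)%N, (j0 + k * q)%N.
split; [exact: leq_addr | exact: leq_trans (leq_addr _ _) |].
have -> : u - ((N + k * p)%N%:R * la - (j0 + k * q)%N%:R * lb) = d * ((u - v0) / d - k%:R).
  by rewrite !natrD !natrM /v0 /d; field; rewrite gt_eqF.
rewrite ger0_norm; last by apply: mulr_ge0; [exact: ltW | rewrite subr_ge0].
by rewrite gtr_pMr // ltrBlDl natr1.
Unshelve. all: end_near. Qed.

Section IrrationalRatio.
Context {R : realType} (la lb : R).
Hypotheses (la_gt0 : 0 < la) (lb_gt0 : 0 < lb).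

Lemma intcomb_small : ~ (exists q : rat, la / lb = ratr q) ->
  forall e, 0 < e -> exists i k : int, 0 < i%:~R * la + k%:~R * lb < e.
Proof.
move=> irr; pose G := [set x | exists i k : int, x = i%:~R * la + k%:~R * lb].
have G_sub x y : G x -> G y -> G (x - y).
  by move=> [i [k ->]] [i' [k' ->]]; exists (i - i'), (k - k'); rewrite !intrB; ring.
have Gla : G la by exists 1, 0; rewrite mul1r mul0r addr0.
have Glb : G lb by exists 0, 1; rewrite mul1r mul0r add0r.
have [dense e e_gt0|[g g_gt0 Gg]] := subgroup_dense_or_cyclic _ G_sub Gla la_gt0.
  by have [_ [i [k ->]] ?] := dense e e_gt0; exists i, k.
have [[n1 la_g] [n2 lb_g]] := (Gg la Gla, Gg lb Glb).
have n2_neq0 : n2%:~R != 0 :> R.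
  by apply: contraTneq lb_gt0 => n2_0; rewrite lb_g n2_0 mul0r ltxx.
case: irr; exists (n1%:~R / n2%:~R).
by rewrite fmorph_div !rmorph_int la_g lb_g -mulf_div divff ?gt_eqF // mulr1.
Qed.

Lemma natcomb_small : ~ (exists q : rat, la / lb = ratr q) ->
  forall e, 0 < e -> exists p q : nat, 0 < `|p%:R * la - q%:R * lb| < e.
Proof.
move=> irr e e_gt0.
have min_gt0 : 0 < Num.min e (Num.min la lb) by rewrite !lt_min e_gt0 la_gt0 lb_gt0.
have [i [k]] := intcomb_small irr _ min_gt0.
rewrite !lt_min => /andP[pos /and3P[small small_la small_lb]].
have int_cases (z : int) : (z%:~R : R) <= 0 \/ 1 <= (z%:~R : R).
  by case: (lerP z 0) => z0; [left; rewrite lerz0 | right; rewrite ler1z -gtz0_ge1].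
exists `|i|%N, `|k|%N; rewrite !natr_absz !intr_norm.
case: (int_cases i) (int_cases k) => [i_le0|i_ge1] [k_le0|k_ge1].
- by exfalso; nra.
- rewrite (ler0_norm i_le0) (ger0_norm (le_trans ler01 k_ge1)) mulNr -opprD normrN.
  by rewrite ger0_norm ?ltW // pos.
- rewrite (ger0_norm (le_trans ler01 i_ge1)) (ler0_norm k_le0) mulNr opprK.
  by rewrite ger0_norm ?ltW // pos.
- by exfalso; nra.
Qed.

Lemma natcomb_dense : ~ (exists q : rat, la / lb = ratr q) ->
  forall u e (N : nat), 0 < e ->
  exists m j : nat, [/\ (N <= m)%N, (N <= j)%N & `|u - (m%:R * la - j%:R * lb)| < e].
Proof.
move=> irr u e N e_gt0; have [p [q /andP[d_gt0 d_lt]]] := natcomb_small irr _ e_gt0.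
have [m [j [Nm Nj close]]] := natcomb_approx _ _ _ _ u N la_gt0 lb_gt0 d_gt0.
by exists m, j; split=> //; exact: lt_trans d_lt.
Qed.

End IrrationalRatio.

Lemma approx_seq {R : realType} {T : nat -> nat -> R} {tau : R} :
  (forall e (N : nat), 0 < e ->
     exists m j : nat, [/\ (N <= m)%N, (N <= j)%N & `|T m j - tau| < e]) ->
  exists m j : nat -> nat, [/\ forall n, (n < m n)%N, forall n, (n < j n)%N &
     (fun n => T (m n) (j n)) @ \oo --> tau].
Proof.
move=> approx.
have /choice [mj mjP] : forall n, exists mj : nat * nat,
    [/\ (n < mj.1)%N, (n < mj.2)%N & `|T mj.1 mj.2 - tau| < harmonic n].
  move=> n; have hn_gt0 : 0 < harmonic n :> R by rewrite /= invr_gt0 ltr0Sn.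
  have [m [j [? ? ?]]] := approx (harmonic n) n.+1 hn_gt0.
  by exists (m, j).
exists (fun n => (mj n).1), (fun n => (mj n).2); split; try by move=> n; case: (mjP n).
apply/cvgrPdist_lt => e e_gt0; near=> n; have [_ _ close] := mjP n.
rewrite distrC; apply: lt_le_trans close _.
apply: le_trans (ler_norm _) _; near: n.
exact: cvgr0_norm_le cvg_harmonic _ e_gt0.
Unshelve. all: end_near. Qed.

Lemma rat_ratio_natr {R : realType} {x y : R} : 0 < x -> 0 < y ->
  (exists r : rat, x / y = ratr r) ->
  exists p q : nat, [/\ (0 < p)%N, (0 < q)%N & p%:R * x = q%:R * y].
Proof.
move=> x_gt0 y_gt0 [r]; rewrite -(divq_num_den r) fmorph_div !rmorph_int => xy.
have den_gt0 : (0 : R) < (denq r)%:~R by rewrite ltr0z denq_gt0.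
have num_gt0 : (0 : R) < (numq r)%:~R.
  have : 0 < x / y by rewrite divr_gt0.
  by rewrite xy pmulr_lgt0 // invr_gt0.
exists `|denq r|%N, `|numq r|%N; rewrite !absz_gt0 -!(intr_eq0 R) !gt_eqF //.
split=> //; rewrite !natr_absz !intr_norm !gtr0_norm //.
have y_neq0 : y != 0 by rewrite gt_eqF.
by rewrite -[x](divfK y_neq0) xy mulrA mulrCA divff ?mulr1 // gt_eqF.
Qed.

Section CordDerivatives.
Context {R : realType} (a b : R) (f : R -> R) (Rr Ll : R).
Hypotheses (a_gt1 : 1 < a) (b_gt1 : 1 < b).
Hypothesis cvgR : (fun n : nat => f (a ^- n) / a ^- n) @ \oo --> Rr.
Hypothesis cvgL : (fun n : nat => f (- b ^- n) / (- b ^- n)) @ \oo --> Ll.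

Let a_gt0 : 0 < a := lt_trans ltr01 a_gt1.
Let b_gt0 : 0 < b := lt_trans ltr01 b_gt1.
Let cord h k := (f h - f (- k)) / (h + k).
Let weight (m j : nat) := a ^- m / (a ^- m + b ^- j).
Let mix t := t * Rr + (1 - t) * Ll.

Lemma Dset_pos {x} : 0 < x -> Dset a b x -> exists2 m, (0 < m)%N & x = a ^- m.
Proof.
move=> x_gt0 [x0|[m m_gt0 [->|x_neg]]]; first by move: x_gt0; rewrite x0 ltxx.
  by exists m.
by move: x_gt0; rewrite x_neg oppr_gt0 ltNge ltW // invr_gt0 exprn_gt0.
Qed.

Lemma Dset_neg {k} : 0 < k -> Dset a b (- k) -> exists2 j, (0 < j)%N & k = b ^- j.
Proof.
move=> k_gt0 [k0|[j j_gt0 [k_neg|/oppr_inj ->]]]; last by exists j.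
  by move: k_gt0; rewrite -oppr_lt0 k0 ltxx.
by move: k_gt0; rewrite -oppr_lt0 k_neg ltNge ltW // invr_gt0 exprn_gt0.
Qed.

Lemma weight_sigmoidN m j : weight m j = sigmoidN (m%:R * ln a - j%:R * ln b).
Proof.
rewrite /weight /sigmoidN expRD expRN !expRM_natl !lnK ?posrE //.
have am : a ^+ m != 0 by rewrite expf_neq0 ?gt_eqF.
have bj : b ^+ j != 0 by rewrite expf_neq0 ?gt_eqF.
have s : a ^+ m + b ^+ j != 0 by rewrite gt_eqF // addr_gt0 // exprn_gt0.
by field; rewrite am bj addrC s.
Qed.

Lemma weight_itv m j : 0 < weight m j < 1.
Proof. by rewrite weight_sigmoidN sigmoidN_gt0 sigmoidN_lt1. Qed.

Lemma mix_itv t : 0 <= t <= 1 -> Num.min Ll Rr <= mix t <= Num.max Ll Rr.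
Proof.
move=> /andP[t_ge0 t_le1]; rewrite /mix.
by case: (leP Ll Rr) => LR; apply/andP; split; nra.
Qed.

Lemma mix_surj x : Num.min Ll Rr <= x <= Num.max Ll Rr -> exists2 t, 0 <= t <= 1 & mix t = x.
Proof.
case: (ltgtP Ll Rr) => [LR|RL|LR] /andP[x_ge x_le].
- exists ((x - Ll) / (Rr - Ll)); last by rewrite /mix; field; rewrite subr_eq0 gt_eqF.
  apply/andP; split; first by apply: divr_ge0; lra.
  by rewrite ler_pdivrMr ?subr_gt0 // mul1r; lra.
- exists ((Ll - x) / (Ll - Rr)); last by rewrite /mix; field; rewrite subr_eq0 gt_eqF.
  apply/andP; split; first by apply: divr_ge0; lra.
  by rewrite ler_pdivrMr ?subr_gt0 // mul1r; lra.
- exists 0; first by rewrite lexx ler01.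
  by rewrite /mix mul0r add0r subr0 mul1r; lra.
Qed.

Lemma mix0 : mix 0 = Ll. Proof. by rewrite /mix mul0r add0r subr0 mul1r. Qed.

Lemma mix1 : mix 1 = Rr. Proof. by rewrite /mix mul1r subrr mul0r addr0. Qed.

Lemma mix_inj : Rr != Ll -> injective mix.
Proof.
move=> RL s t st; have RL0 : Rr - Ll != 0 by rewrite subr_eq0.
have : (s - t) * (Rr - Ll) = mix s - mix t by rewrite /mix; ring.
by rewrite st subrr => /eqP; rewrite mulf_eq0 (negbTE RL0) orbF subr_eq0 => /eqP.
Qed.

Lemma cvg_mix (t : nat -> R) (tau : R) : t @ \oo --> tau ->
  (fun n => mix (t n)) @ \oo --> mix tau.
Proof.
move=> t_tau; apply: cvgD; first exact: (cvgM t_tau (cvg_cst _)).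
have t1 : (fun n => 1 - t n) @ \oo --> 1 - tau by apply: cvgB => //; exact: cvg_cst.
exact: (cvgM t1 (cvg_cst _)).
Qed.

Lemma weight_0n_cvg1 : (fun n => weight 0 n) @ \oo --> (1 : R).
Proof.
have b_n0 : (fun n : nat => b ^- n) @ \oo --> (0 : R).
  exact: (exprVn_cvg0P _ (fun n => n) b_gt1).2 cvg_id.
under eq_fun do rewrite /weight expr0 invr1 mul1r.
suff : (fun n => (1 + b ^- n)^-1) @ \oo --> ((1 + 0)^-1 : R) by rewrite addr0 invr1.
apply: cvgV; first by rewrite addr0 oner_neq0.
exact: (cvgD (cvg_cst _) b_n0).
Qed.

Lemma weight_n0_cvg0 : (fun n => weight n 0) @ \oo --> (0 : R).
Proof.
have a_n0 : (fun n : nat => a ^- n) @ \oo --> (0 : R).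
  exact: (exprVn_cvg0P _ (fun n => n) a_gt1).2 cvg_id.
rewrite -(mul0r (0 + 1)^-1).
apply: (cvgM a_n0); apply: cvgV; first by rewrite add0r oner_neq0.
by under eq_fun do rewrite expr0 invr1; exact: (cvgD a_n0 (cvg_cst _)).
Qed.

Lemma cord_convex h k : 0 < h -> 0 < k ->
  cord h k = h / (h + k) * (f h / h) + (1 - h / (h + k)) * (f (- k) / (- k)).
Proof.
move=> h_gt0 k_gt0; have hk : h + k != 0 by rewrite gt_eqF // addr_gt0.
by rewrite /cord; field; rewrite hk !gt_eqF.
Qed.

Lemma cord_sub_mix_cvg0 {m j : nat -> nat} : m @ \oo --> \oo -> j @ \oo --> \oo ->
  (fun n => cord (a ^- m n) (b ^- j n) - mix (weight (m n) (j n))) @ \oo --> 0.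
Proof.
move=> m_oo j_oo.
have w01 n : 0 <= weight (m n) (j n) <= 1.
  by have /andP[/ltW -> /ltW ->] := weight_itv (m n) (j n).
set w := fun n => weight (m n) (j n).
suff -> : (fun n => cord (a ^- m n) (b ^- j n) - mix (w n)) = (fun n =>
    w n * (f (a ^- m n) / a ^- m n) + (1 - w n) * (f (- b ^- j n) / (- b ^- j n)) - mix (w n)).
  exact: cvg_convex_combB w01 (cvg_comp _ _ m_oo cvgR) (cvg_comp _ _ j_oo cvgL).
by apply/funext => n; rewrite cord_convex ?invr_gt0 ?exprn_gt0.
Qed.

Lemma seq_cord_derivE l : seq_cord_deriv a b f l <->
  exists m j : nat -> nat, [/\ forall n, (0 < m n)%N /\ (0 < j n)%N,
    m @ \oo --> \oo, j @ \oo --> \oo &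
    (fun n => (mix (weight (m n) (j n)))%:E) @ \oo --> l].
Proof.
split=> [[h [k [h_gt0 [k_gt0 [h0 [k0 [Dh [Dk hk_l]]]]]]]]|[m [j [mj_gt0 m_oo j_oo mix_l]]]].
  have /choice [m hm] n : exists m, (0 < m)%N /\ h n = a ^- m.
    by have [m ? ?] := Dset_pos (h_gt0 n) (Dh n); exists m.
  have /choice [j kj] n : exists j, (0 < j)%N /\ k n = b ^- j.
    by have [j ? ?] := Dset_neg (k_gt0 n) (Dk n); exists j.
  have eh : h = fun n => a ^- m n by apply/funext => n; case: (hm n).
  have ek : k = fun n => b ^- j n by apply/funext => n; case: (kj n).
  rewrite {}eh in h0 hk_l; rewrite {}ek in k0 hk_l.
  have m_oo := (exprVn_cvg0P _ _ a_gt1).1 h0; have j_oo := (exprVn_cvg0P _ _ b_gt1).1 k0.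
  exists m, j; split=> //; first by move=> n; case: (hm n); case: (kj n).
  apply: cvge_EFin_sub0 hk_l; rewrite -oppr0.
  by under eq_fun do rewrite -opprB; exact: (cvgN (cord_sub_mix_cvg0 m_oo j_oo)).
exists (fun n => a ^- m n), (fun n => b ^- j n).
split; first by move=> n; rewrite invr_gt0 exprn_gt0.
split; first by move=> n; rewrite invr_gt0 exprn_gt0.
split; first exact: (exprVn_cvg0P _ _ a_gt1).2.
split; first exact: (exprVn_cvg0P _ _ b_gt1).2.
split; first by move=> n; right; exists (m n); [case: (mj_gt0 n) | left].
split; first by move=> n; right; exists (j n); [case: (mj_gt0 n) | right].
by apply: cvge_EFin_sub0 mix_l; exact: cord_sub_mix_cvg0.
Qed.

Lemma seq_cord_deriv_fin l : seq_cord_deriv a b f l ->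
  exists x : R, [/\ l = x%:E, Num.min Ll Rr <= x <= Num.max Ll Rr &
    exists m j : nat -> nat, (fun n => mix (weight (m n) (j n))) @ \oo --> x].
Proof.
move=> /seq_cord_derivE [m [j [_ _ _ mix_l]]].
have mix_w_itv n : Num.min Ll Rr <= mix (weight (m n) (j n)) <= Num.max Ll Rr.
  by apply: mix_itv; have /andP[/ltW -> /ltW ->] := weight_itv (m n) (j n).
have [x [-> mix_x x_itv]] := cvge_EFin_itv mix_w_itv mix_l.
by exists x; split=> //; exists m, j.
Qed.

Lemma weight_approx (tau : R) :
  ~ (exists q : rat, ln a / ln b = ratr q) -> 0 <= tau <= 1 ->
  forall (e : R) (N : nat), 0 < e ->
  exists m j : nat, [/\ (N <= m)%N, (N <= j)%N & `|weight m j - tau| < e].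
Proof.
move=> irr /andP[tau_ge0 tau_le1] e N e_gt0.
(* [sigmoidN] only takes values in (0, 1): aim at an interior [tau'] close to [tau]. *)
pose s := Num.min e 1 / 2.
have s_gt0 : 0 < s by apply: divr_gt0 => //; rewrite lt_min e_gt0 ltr01.
have s_le_e : s <= e / 2 by rewrite /s ler_pM2r // ge_min lexx.
have s_le1 : s <= 1 / 2 by rewrite /s ler_pM2r // ge_min lexx orbT.
pose tau' := (1 - s) * tau + s / 2.
have tau'_gt0 : 0 < tau' by rewrite /tau'; nra.
have tau'_lt1 : tau' < 1 by rewrite /tau'; nra.
pose v0 := ln (tau'^-1 - 1).
have v0_tau' : sigmoidN v0 = tau'.
  by rewrite sigmoidN_ln ?subr_gt0 ?invf_gt1 // addrC subrK invrK.
have e2_gt0 : 0 < e / 2 by rewrite divr_gt0.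
have [d d_gt0 v0_ball] := continuous_sigmoidN v0 _ (nbhsx_ballx (sigmoidN v0) _ e2_gt0).
have [m [j [Nm Nj v0_close]]] :=
  natcomb_dense _ _ (ln_gt0 a_gt1) (ln_gt0 b_gt1) irr v0 d N d_gt0.
exists m, j; split=> //; rewrite weight_sigmoidN.
have := v0_ball _ v0_close; rewrite /ball /= v0_tau' => close.
have : `|tau' - tau| <= e / 2 by rewrite ler_norml /tau'; apply/andP; split; nra.
rewrite distrC in close.
by have := ler_distD tau' (sigmoidN (m%:R * ln a - j%:R * ln b)) tau; lra.
Qed.

Lemma seq_cord_deriv_irrational : ~ (exists q : rat, ln a / ln b = ratr q) ->
  forall x, Num.min Ll Rr <= x <= Num.max Ll Rr -> seq_cord_deriv a b f x%:E.
Proof.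
move=> irr x /mix_surj [tau tau01 <-].
have [m [j [m_gt j_gt w_tau]]] := approx_seq (weight_approx _ irr tau01).
apply/seq_cord_derivE; exists m, j; split.
- by move=> n; rewrite (leq_ltn_trans _ (m_gt n)) ?(leq_ltn_trans _ (j_gt n)).
- by apply: cvgn_infty_ge => n; exact: ltnW.
- by apply: cvgn_infty_ge => n; exact: ltnW.
- exact/cvgr_EFin/cvg_mix.
Qed.

Section Commensurable.
Variables (P Q : nat).
Hypotheses (P_gt0 : (0 < P)%N) (Q_gt0 : (0 < Q)%N) (PQ : P%:R * ln a = Q%:R * ln b).

Lemma weight_periodic m j k : weight (m + P * k) (j + Q * k) = weight m j.
Proof.
have aPbQ : a ^+ P = b ^+ Q.
  apply: ln_inj; rewrite ?posrE ?exprn_gt0 // !lnXn //.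
  by move: PQ; rewrite !mulr_natl.
rewrite /weight !exprD !exprM aPbQ; set c := (b ^+ Q) ^+ k.
have c_neq0 : c != 0 by rewrite expf_neq0 // expf_neq0 // gt_eqF.
have am : a ^+ m != 0 by rewrite expf_neq0 ?gt_eqF.
have bj : b ^+ j != 0 by rewrite expf_neq0 ?gt_eqF.
have s : a ^+ m + b ^+ j != 0 by rewrite gt_eqF // addr_gt0 // exprn_gt0.
by field; rewrite c_neq0 am bj addrC s.
Qed.

Lemma weight_lattice m j :
  weight m j = sigmoidN (((m * Q)%N%:Z - (j * P)%N%:Z)%:~R * (ln a / Q%:R)).
Proof.
have Q_neq0 : Q%:R != 0 :> R by rewrite pnatr_eq0 -lt0n.
rewrite weight_sigmoidN.
have -> : ln b = P%:R * ln a / Q%:R by rewrite PQ mulrAC divff // mul1r.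
by rewrite intrB -!pmulrn !natrM; congr sigmoidN; field.
Qed.

Lemma seq_cord_deriv_weight m0 j0 : seq_cord_deriv a b f (mix (weight m0 j0))%:E.
Proof.
apply/seq_cord_derivE; exists (fun n => m0 + P * n.+1)%N, (fun n => j0 + Q * n.+1)%N.
split.
- by move=> n; rewrite !addn_gt0 !muln_gt0 P_gt0 Q_gt0 !orbT.
- by apply: cvgn_infty_ge => n; nia.
- by apply: cvgn_infty_ge => n; nia.
- by under eq_fun do rewrite weight_periodic; exact: cvg_cst.
Qed.

Lemma seq_cord_deriv_locally_unique r : r != Rr -> r != Ll ->
  exists2 e, 0 < e & forall x y : R,
    seq_cord_deriv a b f x%:E -> seq_cord_deriv a b f y%:E ->
    `|r - x| < e -> `|r - y| < e -> x = y.
Proof.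
move=> rR rL; have [RL|RL] := eqVneq Rr Ll.
  exists 1 => // x y.
  suff cst z : seq_cord_deriv a b f z%:E -> z = Ll by move=> /cst -> /cst ->.
  move=> /seq_cord_deriv_fin [x0 [[<-] _ [m [j mix_z]]]].
  by apply: near_cst_cvg_eq mix_z; near=> n; rewrite /mix RL; ring.
have RL0 : Rr - Ll != 0 by rewrite subr_eq0.
pose tau := (r - Ll) / (Rr - Ll).
have tau_neq0 : tau != 0 by rewrite mulf_neq0 ?invr_eq0 // subr_eq0.
have tau_neq1 : tau != 1.
  apply: contraNneq rR => tau1; have := divfK RL0 (r - Ll).
  by rewrite -/tau tau1 mul1r; lra.
pose c := ln a / Q%:R; have c_gt0 : 0 < c by rewrite divr_gt0 ?ln_gt0 ?ltr0n.
have [d d_gt0 iso] := sigmoidN_lattice_isolated _ _ c_gt0 tau_neq0 tau_neq1.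
pose e := d * `|Rr - Ll|; have e_gt0 : 0 < e by rewrite mulr_gt0 ?normr_gt0.
have mix_dist t : `|r - mix t| = `|Rr - Ll| * `|tau - t|.
  by rewrite -normrM; congr `|_|; rewrite /mix /tau; field.
have near_lattice x : seq_cord_deriv a b f x%:E -> `|r - x| < e ->
    exists k : int, x = mix (sigmoidN (k%:~R * c)) /\ `|sigmoidN (k%:~R * c) - tau| < d.
  move=> /seq_cord_deriv_fin [x0 [[<-] _ [m [j mix_x]]]] rx.
  pose k n := ((m n * Q)%N%:Z - (j n * P)%N%:Z).
  have w_k n : weight (m n) (j n) = sigmoidN ((k n)%:~R * c) := weight_lattice _ _.
  have ex_gt0 : 0 < e - `|r - x| by rewrite subr_gt0.
  have [N _ near_tau] : \forall n \near \oo, `|sigmoidN ((k n)%:~R * c) - tau| < d.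
    near=> n; have : `|x - mix (weight (m n) (j n))| < e - `|r - x|.
      by near: n; exact: cvgr_dist_lt.
    rewrite w_k => close; have : `|r - mix (sigmoidN ((k n)%:~R * c))| < e.
      by apply: le_lt_trans (ler_distD x _ _) _; lra.
    by rewrite mix_dist [e]mulrC ltr_pM2l ?normr_gt0 // distrC.
  exists (k N); split; last by apply: near_tau => /=.
  apply: near_cst_cvg_eq mix_x; exists N => // n /= Nn.
  by rewrite w_k (iso _ _ (near_tau n Nn) (near_tau N (leqnn N))).
exists e => // x y Sx Sy rx ry.
have [kx [-> kx_tau]] := near_lattice x Sx rx; have [ky [-> ky_tau]] := near_lattice y Sy ry.
by rewrite (iso _ _ kx_tau ky_tau).
Unshelve. all: end_near. Qed.

Lemma limit_point_seq_cord_deriv_rational :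
  limit_point (seq_cord_deriv a b f) `<=` [set Rr%:E; Ll%:E].
Proof.
move=> y LP.
have S_itv z : seq_cord_deriv a b f z -> ((Num.min Ll Rr)%:E <= z <= (Num.max Ll Rr)%:E)%E.
  by move=> /seq_cord_deriv_fin [x [-> x_itv _]]; rewrite !lee_fin.
have := limit_point_fin_num S_itv _ LP; case: y LP => // r LP _.
have [->|rR] := eqVneq r Rr; first by left.
have [->|rL] := eqVneq r Ll; first by right.
have [e e_gt0 S_uniq] := seq_cord_deriv_locally_unique _ rR rL.
by case: (EFin_not_limit_point e_gt0 S_uniq LP).
Qed.

Lemma limit_point_seq_cord_deriv_RL : Rr != Ll ->
  limit_point (seq_cord_deriv a b f) Rr%:E /\ limit_point (seq_cord_deriv a b f) Ll%:E.
Proof.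
move=> RL; split.
- apply: (@limit_point_cvg _ _ (fun n => (mix (weight 0 n))%:E)).
  + by move=> n; exact: seq_cord_deriv_weight.
  + move=> n; rewrite eqe -[X in _ != X]mix1 (inj_eq (mix_inj RL)).
    by have /andP[_ /lt_eqF ->] := weight_itv 0 n.
  + by rewrite -mix1; exact/cvgr_EFin/cvg_mix/weight_0n_cvg1.
- apply: (@limit_point_cvg _ _ (fun n => (mix (weight n 0))%:E)).
  + by move=> n; exact: seq_cord_deriv_weight.
  + move=> n; rewrite eqe -[X in _ != X]mix0 (inj_eq (mix_inj RL)).
    by have /andP[/gt_eqF -> _] := weight_itv n 0.
  + by rewrite -mix0; exact/cvgr_EFin/cvg_mix/weight_n0_cvg0.
Qed.

End Commensurable.

End CordDerivatives.

Theorem theorem4p7 (R : realType) (a b : R) (f : R -> R) (Rr Ll : R) :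
  1 < a -> 1 < b -> f 0 = 0 ->
  (fun n : nat => f (a ^- n) / a ^- n) @ \oo --> Rr ->
  (fun n : nat => f (- b ^- n) / (- b ^- n)) @ \oo --> Ll ->
  ((exists q : rat, ln a / ln b = ratr q) ->
     limit_point (seq_cord_deriv a b f) `<=` [set Rr%:E; Ll%:E] /\
     (Rr != Ll -> limit_point (seq_cord_deriv a b f) Rr%:E /\
                  limit_point (seq_cord_deriv a b f) Ll%:E)) /\
  (~ (exists q : rat, ln a / ln b = ratr q) ->
     forall x : R, Num.min Ll Rr <= x <= Num.max Ll Rr ->
       seq_cord_deriv a b f x%:E).
Proof.
move=> a_gt1 b_gt1 _ cvgR cvgL; split; last exact: seq_cord_deriv_irrational.
move=> /(rat_ratio_natr (ln_gt0 a_gt1) (ln_gt0 b_gt1)) [P [Q [P_gt0 Q_gt0 PQ]]].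
split; first exact: limit_point_seq_cord_deriv_rational PQ.
exact: limit_point_seq_cord_deriv_RL PQ.
Qed.
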